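(* Let $R$ be a ring, let $B$ be a ring, and let $A$ be an $R$-subalgebra of $B$, so that we have ring morphisms $R \xrightarrow{\tau} A \xrightarrow{g} B$ with $g$ the inclusion. Let $A^* = A^*_{B,R}$ denote the Lipschitz saturation of $A$ in $B$ relative to $R \to A \to B$. Then: (1) $A \subseteq A^*$; (2) $(A^* )^* = A^*$, where $(A^* )^*$ denotes the Lipschitz saturation of $A^*$ in $B$ relative to the sequence $R \to A^* \hookrightarrow B$ (with $R \to A^*$ the composite of $\tau$ and the inclusion $A \subseteq A^*$, and $A^* \hookrightarrow B$ the inclusion).
   Context: All rings are commutative with identity. For a sequence of ring morphisms $R \xrightarrow{\tau} A \xrightarrow{g} B$ (so $A$ and $B$ are $R$-algebras and $B$ is an $A$-algebra), let $\varphi: B\otimes_R B \to B \otimes_A B$ be the canonical $R$-algebra morphism $x\otimes_R y \mapsto x \otimes_A y$, and let $\Delta: B \to B\otimes_R B$, $\Delta(b) = b\otimes_R 1 - 1 \otimes_R b$. The Lipschitz saturation of $A$ in $B$ relative to $R\to A\to B$ is $A^*_{B,R} := \{x \in B \mid \Delta(x) \in \overline{\ker\varphi}\}$, where for an ideal $I$ of a ring $S$, $\overline{I}$ denotes the integral closure of the ideal $I$, i.e. the set of $u\in S$ satisfying an equation $u^n + a_1u^{n-1}+\cdots+a_n = 0$ with $a_i \in I^i$. (It is an $R$-subalgebra of $B$ containing $g(A)$.) *)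

From HB Require Import structures.
From mathcomp Require Import all_boot all_order all_algebra.
Set Implicit Arguments. Unset Strict Implicit. Unset Printing Implicit Defensive.
Import GRing.Theory.
Local Open Scope ring_scope.

Fixpoint ideal_pow (T : comPzRingType) (I : T -> Prop) (n : nat) : T -> Prop :=
  match n with
  | 0 => fun _ => True
  | n'.+1 => fun x => exists s : seq (T * T),
      (forall p, p \in s -> I p.1 /\ ideal_pow I n' p.2) /\
      x = \sum_(p <- s) p.1 * p.2
  end.

Definition int_closure (T : comPzRingType) (I : T -> Prop) (u : T) : Prop :=
  exists (n : nat) (a : nat -> T),
    (0 < n)%N /\ (forall i, (1 <= i <= n)%N -> ideal_pow I i (a i)) /\
    u ^+ n + \sum_(1 <= i < n.+1) a i * u ^+ (n - i) = 0.

(* (T, j1, j2) is the tensor product B (x)_S B of B with itself over the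
   subring S of B, characterised (up to unique isomorphism) as the pushout
   of B <- S -> B in commutative rings: j1 b = b (x) 1, j2 b = 1 (x) b. *)
Definition is_tensor (B : comPzRingType) (S : B -> Prop) (T : comPzRingType)
    (j1 j2 : {rmorphism B -> T}) : Prop :=
  (forall s, S s -> j1 s = j2 s) /\
  forall (T' : comPzRingType) (f1 f2 : {rmorphism B -> T'}),
    (forall s, S s -> f1 s = f2 s) ->
    exists h : {rmorphism T -> T'},
      ((forall b, h (j1 b) = f1 b) /\ (forall b, h (j2 b) = f2 b)) /\
      forall h' : {rmorphism T -> T'},
        (forall b, h' (j1 b) = f1 b) -> (forall b, h' (j2 b) = f2 b) ->
        forall t, h' t = h t.

(* Lipschitz saturation: x in B with Delta(x) = x(x)1 - 1(x)x in the integral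
   closure of ker phi, where phi : B(x)_R B -> B(x)_A B is the canonical map. *)
Definition lip_sat (B T1 T2 : comPzRingType) (d1 d2 : B -> T1) (phi : T1 -> T2)
    (x : B) : Prop :=
  int_closure (fun t => phi t = 0) (d1 x - d2 x).

From HB Require Import structures.
From mathcomp Require Import all_boot all_order all_algebra.
From mathcomp Require Import ring_quotient generic_quotient boolp.
Import GRing.Theory.
Local Open Scope ring_scope.
Set Implicit Arguments. Unset Strict Implicit. Unset Printing Implicit Defensive.

(* For a in A the element Delta(a) already lies in ker phi, which gives (1).
   For (2), let C be the integral closure of ker phi.  Through the Rees
   algebra (u is in the integral closure of I iff uX is integral over the
   subring of polynomials whose i-th coefficient lies in I^i) one sees that
   C is an ideal and contains the integral closure of any ideal inside it.
   The quotient map T1 -> T1/C identifies b(x)1 and 1(x)b for b in A*, so it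
   factors through B(x)_{A*}B, whence ker psi is inside C and so is its
   integral closure.  Conversely, psi factors through phi because A is
   inside A*, so ker phi is inside ker psi. *)

Section IdealPow.
Variables (T : comPzRingType) (I : T -> Prop).

Lemma ideal_pow0 n : ideal_pow I n 0.
Proof. by case: n => //= n; exists [::]; rewrite big_nil. Qed.

Lemma ideal_powD n x y :
  ideal_pow I n x -> ideal_pow I n y -> ideal_pow I n (x + y).
Proof.
case: n => // n [s [Is ->]] [r [Ir ->]]; exists (s ++ r); rewrite big_cat.
by split=> // p; rewrite mem_cat => /orP[/Is | /Ir].
Qed.

Lemma ideal_powMl n a x : ideal_pow I n x -> ideal_pow I n (a * x).
Proof.
elim: n x => // n IHn _ [s [Is ->]]; exists [seq (p.1, a * p.2) | p <- s].
split; last by rewrite big_map mulr_sumr; apply: eq_bigr => p _; rewrite mulrCA.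
by move=> _ /mapP[p /Is[Ip1 Ip2] ->]; split=> //; apply: IHn.
Qed.

Lemma ideal_powB n x y :
  ideal_pow I n x -> ideal_pow I n y -> ideal_pow I n (x - y).
Proof. by move=> Ix Iy; apply: ideal_powD Ix _; rewrite -mulN1r; apply: ideal_powMl. Qed.

Lemma ideal_powM m n x y :
  ideal_pow I m x -> ideal_pow I n y -> ideal_pow I (m + n) (x * y).
Proof.
elim: m x => [|m IHm] x Ix Iy; first by rewrite add0n; apply: ideal_powMl.
case: Ix => s [Is ->]; exists [seq (p.1, p.2 * y) | p <- s].
split; last by rewrite big_map mulr_suml; apply: eq_bigr => p _; rewrite mulrA.
by move=> _ /mapP[p /Is[Ip1 Ip2] ->]; split=> //; apply: IHm.
Qed.

Lemma ideal_pow1 x : I x -> ideal_pow I 1 x.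
Proof.
move=> Ix; exists [:: (x, 1)]; rewrite big_seq1 mulr1.
by split=> // p; rewrite inE => /eqP ->.
Qed.

End IdealPow.

Lemma ideal_powS (T : comPzRingType) (I J : T -> Prop) n x :
  (forall t, J t -> I t) -> ideal_pow J n x -> ideal_pow I n x.
Proof.
move=> JI; elim: n x => // n IHn _ [s [Js ->]]; exists s.
by split=> // p /Js[/JI Ip1 /IHn Ip2].
Qed.

Lemma int_closureS (T : comPzRingType) (I J : T -> Prop) u :
  (forall t, J t -> I t) -> int_closure J u -> int_closure I u.
Proof.
move=> JI [n [a [n_gt0 [Ja eq_u]]]]; exists n, a.
by split=> //; split=> // i /Ja; apply: ideal_powS.
Qed.

Lemma mem_int_closure (T : comPzRingType) (I : T -> Prop) u :
  I u -> int_closure I u.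
Proof.
move=> Iu; exists 1%N, (fun=> - u); split=> //; split.
  move=> i /andP[i_gt0 i_le1]; have -> : i = 1%N by apply/eqP; rewrite eqn_leq i_le1.
  by rewrite -mulN1r; apply/ideal_powMl/ideal_pow1.
by rewrite big_nat1 subnn mulr1 expr1 subrr.
Qed.

Lemma int_closure_zero_ring (T : comPzRingType) (I : T -> Prop) u :
  (1 : T) = 0 -> int_closure I u.
Proof.
move=> eq10; exists 1%N, (fun=> 0); split=> //; split=> [i _|]; first exact: ideal_pow0.
by rewrite -[LHS]mulr1 eq10 mulr0.
Qed.

Lemma int_closure_revE (T : comPzRingType) (I : T -> Prop) u :
  int_closure I u <->
  exists n (b : nat -> T), [/\ (0 < n)%N,
    forall j, (j < n)%N -> ideal_pow I (n - j) (b j) &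
    u ^+ n + \sum_(j < n) b j * u ^+ j = 0].
Proof.
have sum_rev n (F : nat -> T) :
    \sum_(1 <= i < n.+1) F i = \sum_(j < n) F (n - j)%N.
  by rewrite big_nat_rev big_add1 big_mkord.
split=> [[n [a [n_gt0 [Ia eq_u]]]] | [n [b [n_gt0 Ib eq_u]]]].
  exists n, (fun j => a (n - j)%N); split=> // [j lt_jn|].
    by apply: Ia; rewrite subn_gt0 lt_jn leq_subr.
  rewrite -[RHS]eq_u sum_rev; congr (_ + _); apply: eq_bigr => j _.
  by rewrite subKn // ltnW.
exists n, (fun i => b (n - i)%N); split=> //; split.
  move=> i /andP[i_gt0 le_in]; have := Ib (n - i)%N.
  by rewrite subKn // ltn_subrL i_gt0; apply.
rewrite sum_rev -[RHS]eq_u; congr (_ + _); apply: eq_bigr => j _.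
by rewrite subKn // ltnW.
Qed.

(* Polynomial rings and ring quotients require a nontrivial ring. *)
Definition nonzero (T : comPzRingType) of (1 : T) != 0 : Type := T.

Section Nonzero.
Variables (T : comPzRingType) (h : (1 : T) != 0).
HB.instance Definition _ := GRing.ComPzRing.on (nonzero h).
HB.instance Definition _ := GRing.PzSemiRing_isNonZero.Build (nonzero h) h.

Lemma ideal_pow_nonzeroE (I : T -> Prop) n x :
  ideal_pow (T := nonzero h) I n x <-> ideal_pow I n x.
Proof.
elim: n x => // n IHn x.
by split=> -[s [Is eq_x]]; exists s; split=> // p /Is[Ip1 /IHn].
Qed.

Lemma int_closure_nonzeroE (I : T -> Prop) u :
  int_closure (T := nonzero h) I u <-> int_closure I u.
Proof.
by split=> -[n [a [n_gt0 [Ia eq_u]]]]; exists n, a;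
  split=> //; split=> // i /Ia /ideal_pow_nonzeroE.
Qed.

End Nonzero.

Section Rees.
Variables (T : comNzRingType) (I : T -> Prop).

Definition rees_pred : {pred {poly T}} :=
  fun p => `[< forall i, ideal_pow I i p`_i >].

Lemma rees_predP (p : {poly T}) :
  reflect (forall i, ideal_pow I i p`_i) (p \in rees_pred).
Proof. exact: asboolP. Qed.

Lemma rees_subring_closed : subring_closed rees_pred.
Proof.
split.
- by apply/rees_predP => -[|i] //; rewrite coef1; apply: ideal_pow0.
- move=> p q /rees_predP Ip /rees_predP Iq; apply/rees_predP => i.
  by rewrite coefB; apply: ideal_powB.
- move=> p q /rees_predP Ip /rees_predP Iq; apply/rees_predP => i.
  rewrite coefM; apply: (big_ind (ideal_pow I i)) => [|y z|j _].
  + exact: ideal_pow0.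
  + exact: ideal_powD.
  + by have := ideal_powM (Ip j) (Iq (i - j)%N); rewrite subnKC // -ltnS.
Qed.

HB.instance Definition _ := GRing.isSubringClosed.Build _ rees_pred rees_subring_closed.

Record rees_algebra := ReesAlgebra { rees_val : {poly T}; _ : rees_val \in rees_pred }.
HB.instance Definition _ := [isSub for rees_val].
HB.instance Definition _ := [Choice of rees_algebra by <:].
HB.instance Definition _ := [SubChoice_isSubComNzRing of rees_algebra by <:].

Local Notation integral := (integralOver (val : rees_algebra -> {poly T})).

Lemma integral_rees_monomial t k : ideal_pow I k t -> integral (t%:P * 'X^k).
Proof.
move=> Ikt; have Rt : t%:P * 'X^k \in rees_pred.
  apply/rees_predP => i; rewrite coefMXn coefC.
  case: ltngtP => [_ | lt_ki | ->]; [exact: ideal_pow0 | | by rewrite subnn].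
  by rewrite subn_eq0 leqNgt lt_ki; apply: ideal_pow0.
exact: (integral_id _ (ReesAlgebra Rt)).
Qed.

Section IntegralGenerators.
Variable J : T -> Prop.
Hypothesis integral_J : forall t, J t -> integral (t%:P * 'X).

Lemma integral_ideal_pow k b : ideal_pow J k b -> integral (b%:P * 'X^k).
Proof.
elim: k b => [|k IHk] b; first exact: (@integral_rees_monomial b 0).
case=> s [Js ->]; rewrite big_seq rmorph_sum big_distrl /=.
apply: (big_ind integral); [exact: integral0 | exact: integral_add |].
move=> p /Js[Jp1 Jp2]; rewrite rmorphM exprS mulrACA.
exact: integral_mul (integral_J Jp1) (IHk _ Jp2).
Qed.

Lemma int_closure_integral u : int_closure J u -> integral (u%:P * 'X).
Proof.
case/int_closure_revE=> n [b [n_gt0 Jb eq_u]].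
pose Q : {poly {poly T}} :=
  \poly_(j < n.+1) (if (j < n)%N then (b j)%:P * 'X^(n - j) else 1).
have monic_Q : Q \is monic by apply/monicP; rewrite lead_coef_poly ?ltnn ?oner_neq0.
apply: integral_root_monic monic_Q _ _; last first.
  apply/integral_poly => i; rewrite coef_poly; case: ifP => _; last exact: integral0.
  by case: ifP => [/Jb/integral_ideal_pow // | _]; apply: integral1.
have coefQ (j : 'I_n) :
    (b j)%:P * 'X^(n - j) * (u%:P * 'X) ^+ j = (b j * u ^+ j)%:P * 'X^n.
  by rewrite exprMn -rmorphXn mulrACA -exprD subnK 1?ltnW // -rmorphM.
rewrite rootE horner_poly big_ord_recr /= ltnn mul1r.
under eq_bigr => j _ do rewrite ltn_ord coefQ.
by rewrite -big_distrl -rmorph_sum exprMn -rmorphXn -mulrDl -rmorphD addrC eq_u mul0r.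
Qed.

End IntegralGenerators.

Lemma integral_int_closure u : integral (u%:P * 'X) -> int_closure I u.
Proof.
case=> p monic_p; set q := map_poly val p => root_q.
have monic_q : q \is monic by apply: monic_map.
have [n size_q] : exists n, size q = n.+1.
  by exists (size q).-1; rewrite prednK // lt0n size_poly_eq0 monic_neq0.
have lead_q : q`_n = 1 by move/monicP: monic_q; rewrite lead_coefE size_q.
move: root_q; rewrite rootE horner_coef size_q big_ord_recr /= lead_q mul1r.
move=> /eqP/(congr1 (fun r : {poly T} => r`_n)); rewrite coef0 coefD coef_sum.
under eq_bigr => i _ do
  rewrite exprMn -rmorphXn mulrA coefMXn ltnNge (ltnW (ltn_ord i)) /= coefMC.
rewrite exprMn -rmorphXn coefMXn ltnn subnn coefC eqxx.
move=> eq_u; apply/int_closure_revE; exists n, (fun j => q`_j`_(n - j)); split.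
- case: n size_q lead_q eq_u => // size_q lead_q.
  by rewrite big_ord0 add0r expr0 => /eqP; rewrite oner_eq0.
- by move=> j _; rewrite coef_map; apply/rees_predP/(valP p`_j).
- by rewrite addrC.
Qed.

Lemma int_closure_reesE u : int_closure I u <-> integral (u%:P * 'X).
Proof.
split=> [|/integral_int_closure //]; apply: int_closure_integral => t It.
by rewrite -[X in _ * X]expr1; apply/integral_rees_monomial/ideal_pow1.
Qed.

End Rees.

Lemma int_closure_nonzero_reesE (T : comPzRingType) (h : (1 : T) != 0)
    (I : T -> Prop) u :
  int_closure I u <->
  integralOver (val : rees_algebra (T := nonzero h) I -> _) ((u : nonzero h)%:P * 'X).
Proof. by rewrite -int_closure_reesE; apply: iff_sym; apply: int_closure_nonzeroE. Qed.

Section IntegralClosureIdeal.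
Variables (T : comPzRingType) (I : T -> Prop).

Lemma int_closure0 : int_closure I 0.
Proof.
exists 1%N, (fun=> 0); split=> //; split=> [i _|]; first exact: ideal_pow0.
by rewrite expr1 big_nat1 mul0r addr0.
Qed.

Lemma int_closureD x y : int_closure I x -> int_closure I y -> int_closure I (x + y).
Proof.
have [/int_closure_zero_ring // | h] := eqVneq (1 : T) 0.
move=> /(int_closure_nonzero_reesE h) Ix /(int_closure_nonzero_reesE h) Iy.
by apply/(int_closure_nonzero_reesE h); rewrite rmorphD mulrDl; apply: integral_add.
Qed.

Lemma int_closureMl a x : int_closure I x -> int_closure I (a * x).
Proof.
have [/int_closure_zero_ring // | h] := eqVneq (1 : T) 0.
move=> /(int_closure_nonzero_reesE h) Ix; apply/(int_closure_nonzero_reesE h).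
rewrite rmorphM -mulrA; apply: integral_mul Ix.
by have := @integral_rees_monomial (nonzero h) I a 0 Logic.I; rewrite mulr1.
Qed.

Lemma int_closure_trans (J : T -> Prop) u :
  (forall t, J t -> int_closure I t) -> int_closure J u -> int_closure I u.
Proof.
have [/int_closure_zero_ring // | h] := eqVneq (1 : T) 0.
move=> JI /(int_closure_nonzeroE (h := h)) Ju; apply/(int_closure_nonzero_reesE h).
by apply: int_closure_integral Ju => t /JI /(int_closure_nonzero_reesE h).
Qed.

End IntegralClosureIdeal.

Section IntegralClosureKernel.
Local Open Scope quotient_scope.
Variables (T : comPzRingType) (I : T -> Prop).
Hypothesis proper_closure : ~ int_closure I 1.

Let nonzero_T : (1 : T) != 0.
Proof. by apply/eqP => /(@int_closure_zero_ring _ I 1). Qed.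

Definition int_closure_pred : {pred nonzero nonzero_T} :=
  fun t => `[< int_closure I t >].

Lemma int_closure_idealr_closed : idealr_closed int_closure_pred.
Proof.
split; rewrite /int_closure_pred /in_mem /=.
- exact/asboolP/int_closure0.
- exact/asboolP.
- move=> a u v /asboolP Iu /asboolP Iv; apply/asboolP.
  exact: (int_closureD (@int_closureMl T I a u Iu) Iv).
Qed.

HB.instance Definition _ :=
  isIdealr.Build (nonzero nonzero_T) int_closure_pred int_closure_idealr_closed.

Lemma int_closure_kernel :
  exists (Q : comPzRingType) (pi : {rmorphism T -> Q}),
    forall t, pi t = 0 <-> int_closure I t.
Proof.
exists {ideal_quot int_closure_pred}, (\pi : {rmorphism nonzero nonzero_T -> _}) => t /=.
split=> [pit0 | It].
  suff : t - 0 \in int_closure_pred by rewrite subr0 => /asboolP.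
  by rewrite Quotient.idealrBE; apply/eqP; rewrite pit0 pi_zeror.
have : t - 0 \in int_closure_pred by rewrite subr0; apply/asboolP.
by rewrite Quotient.idealrBE => /eqP ->; apply: pi_zeror.
Qed.

End IntegralClosureKernel.

Lemma tensor_morph_eq (B T Q : comPzRingType) (S : B -> Prop)
    (j1 j2 : {rmorphism B -> T}) (f g : {rmorphism T -> Q}) :
  is_tensor S j1 j2 ->
  (forall b, f (j1 b) = g (j1 b)) -> (forall b, f (j2 b) = g (j2 b)) -> f =1 g.
Proof.
move=> [j12 univ] fg1 fg2 t.
have [h [_ h_uniq]] := univ Q (f \o j1) (f \o j2) (fun s Ss => congr1 f (j12 s Ss)).
by rewrite (h_uniq f) // (h_uniq g) // => b; rewrite /= ?fg1 ?fg2.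
Qed.

Lemma tensor_ker_sub (B T T' Q : comPzRingType) (S S' : B -> Prop)
    (i1 i2 : {rmorphism B -> T}) (l1 l2 : {rmorphism B -> T'})
    (psi : {rmorphism T -> T'}) (f : {rmorphism T -> Q}) :
  is_tensor S i1 i2 -> is_tensor S' l1 l2 ->
  (forall b, psi (i1 b) = l1 b) -> (forall b, psi (i2 b) = l2 b) ->
  (forall s, S' s -> f (i1 s) = f (i2 s)) ->
  forall t, psi t = 0 -> f t = 0.
Proof.
move=> tensorT [_ univ] psi1 psi2 fS' t psit0.
have [h [[h1 h2] _]] := univ Q (f \o i1) (f \o i2) fS'.
have -> : f t = h (psi t).
  apply: (tensor_morph_eq (g := h \o psi) tensorT) => b /=.
    by rewrite psi1 h1.
  by rewrite psi2 h2.
by rewrite psit0 rmorph0.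
Qed.

Theorem mainTheorem1
  (R B : comPzRingType) (tau : {rmorphism R -> B}) (A : B -> Prop)
  (A_tau : forall r, A (tau r))
  (A_sub : forall x y, A x -> A y -> A (x - y))
  (A_mul : forall x y, A x -> A y -> A (x * y))
  (T1 : comPzRingType) (i1 i2 : {rmorphism B -> T1})
  (hT1 : is_tensor (fun b => exists r, b = tau r) i1 i2)
  (T2 : comPzRingType) (k1 k2 : {rmorphism B -> T2})
  (hT2 : is_tensor A k1 k2)
  (phi : {rmorphism T1 -> T2})
  (phi1 : forall b, phi (i1 b) = k1 b) (phi2 : forall b, phi (i2 b) = k2 b) :
  (forall a, A a -> lip_sat i1 i2 phi a) /\
  (forall (T3 : comPzRingType) (l1 l2 : {rmorphism B -> T3}),
     is_tensor (lip_sat i1 i2 phi) l1 l2 ->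
     forall psi : {rmorphism T1 -> T3},
       (forall b, psi (i1 b) = l1 b) -> (forall b, psi (i2 b) = l2 b) ->
       forall x, lip_sat i1 i2 psi x <-> lip_sat i1 i2 phi x).
Proof.
have A_lip a : A a -> lip_sat i1 i2 phi a.
  by move=> Aa; apply: mem_int_closure; rewrite rmorphB /= phi1 phi2 hT2.1 ?subrr.
split=> // T3 l1 l2 hT3 psi psi1 psi2 x; split; last first.
  apply: int_closureS => t /(tensor_ker_sub hT1 hT2 phi1 phi2); apply.
  by move=> a Aa; rewrite psi1 psi2 hT3.1 //; apply: A_lip.
have [closure_full | /int_closure_kernel [Q [pi piE]]] :=
  pselect (int_closure (fun t => phi t = 0) 1).
  by rewrite /lip_sat -[_ - _]mulr1 => _; apply: int_closureMl.
apply: int_closure_trans => t /(tensor_ker_sub hT1 hT3 psi1 psi2) psi_ker.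
apply/piE/psi_ker => a lip_a; apply/eqP; rewrite -subr_eq0 -rmorphB.
exact/eqP/piE.
Qed.
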